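(* Let $\mathcal{A}$ be any poset, $H$ a Hilbert space and $(H_a)_{a\in\mathcal{A}}$ an increasing family of closed subspaces of $H$ satisfying the intersection property $\pi(\hat a\cap\hat b)=\pi_a\pi_b$ for all $a,b\in\mathcal A$. For $a\in\mathcal{A}^+$ let $s_a^\perp$ denote the orthogonal projection of $H$ onto $S_a=H_a\cap\bigcap_{b<a}H_b^\perp$ (with $b\in\mathcal A^+$ and $H_1=H$). Then for all $a,b\in\mathcal{A}^+$, $$s_a^\perp s_b^\perp=\delta_a(b)\,s_a^\perp,$$ where $\delta_a(b)=1$ if $a=b$ and $0$ otherwise.
   Context: $\hat a=\{b:b\le a\}$. $\mathcal{A}^{+}$ denotes $\mathcal{A}$ with a new element $1$ strictly greater than all elements of $\mathcal A$; $H_1=H$. For $\mathcal{B}\subseteq\mathcal{A}$, $H(\mathcal{B})$ is the closure of $\sum_{b\in\mathcal{B}}H_b$ (zero if empty), $\pi(\mathcal{B})$ the orthogonal projection onto $H(\mathcal{B})$, and $\pi_a=\pi(\hat a)$ is the orthogonal projection onto $H_a$. *)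

From HB Require Import structures.
From mathcomp Require Import all_boot all_order all_algebra.
From mathcomp Require Import all_classical all_reals all_analysis.
Set Implicit Arguments. Unset Strict Implicit. Unset Printing Implicit Defensive.
Import Order.TTheory GRing.Theory Num.Theory.
Import numFieldNormedType.Exports.
Local Open Scope classical_set_scope.
Local Open Scope ring_scope.

(* ip is an inner product inducing the norm of H (so H with ip is a real
   Hilbert space when H is complete). *)
Definition is_inner_product {R : realType} {H : normedModType R}
  (ip : H -> H -> R) : Prop :=
  [/\ forall (a : R) (x y z : H), ip (a *: x + y) z = a * ip x z + ip y z,
      forall x y : H, ip x y = ip y x &
      forall x : H, ip x x = `|x| ^+ 2].

Definition closed_subspace {R : realType} {H : normedModType R} (M : set H) :=
  [/\ M 0, forall (a : R) (x y : H), M x -> M y -> M (a *: x + y) & closed M].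

Definition orth {R : realType} {H : normedModType R} (ip : H -> H -> R)
  (M : set H) : set H := [set x | forall y, M y -> ip x y = 0].

Definition oproj {R : realType} {H : normedModType R} (ip : H -> H -> R)
  (M : set H) (x : H) : H :=
  xget 0 [set y | M y /\ (forall z, M z -> ip (x - y) z = 0)].

Definition Hsum {R : realType} {H : normedModType R} {A : Type}
  (Hs : A -> set H) (B : set A) : set H :=
  closure [set x | exists (n : nat) (f : 'I_n -> A) (g : 'I_n -> H),
     (forall i, B (f i) /\ Hs (f i) (g i)) /\ x = \sum_(i < n) g i].

(* A^+ = option A, where None is the new top element 1 *)
Definition leplus {d} {A : porderType d} (a b : option A) : bool :=
  match a, b with
  | _, None => true
  | None, Some _ => false
  | Some x, Some y => (x <= y)%O
  end.

Definition ltplus {d} {A : porderType d} (a b : option A) : bool :=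
  (a != b) && leplus a b.

Definition Hplus {R : realType} {H : normedModType R} {d} {A : porderType d}
  (Hs : A -> set H) (a : option A) : set H :=
  match a with Some x => Hs x | None => setT end.

Definition Sset {R : realType} {H : normedModType R} {d} {A : porderType d}
  (ip : H -> H -> R) (Hs : A -> set H) (a : option A) : set H :=
  Hplus Hs a `&` \bigcap_(b in [set b | ltplus b a]) orth ip (Hplus Hs b).

From HB Require Import structures.
From mathcomp Require Import all_boot all_order all_algebra.
From mathcomp Require Import all_classical all_reals all_analysis.
From mathcomp Require Import ring lra.
Set Implicit Arguments. Unset Strict Implicit. Unset Printing Implicit Defensive.
Import Order.TTheory GRing.Theory Num.Theory.
Import numFieldNormedType.Exports.
Local Open Scope classical_set_scope.
Local Open Scope ring_scope.

(* We show that S_a and S_b are orthogonal whenever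
   a <> b: if a and b are comparable this is immediate from the definition;
   if they are incomparable, a vector v of S_b lies in H_b and is orthogonal
   to H_c for every c <= a, b, hence pi_a v = pi_a pi_b v = pi(a^ & b^) v = 0
   by the intersection property, i.e. v is orthogonal to H_a, which contains
   S_a.  The identity s_a s_b = delta_a(b) s_a then follows from the basic
   properties of orthogonal projections. *)

Lemma quadratic_dominates_linear (R : realFieldType) (c s : R) :
  0 <= s -> (forall t, 2 * t * c <= t ^+ 2 * s) -> c = 0.
Proof.
move=> s0 hq; set t := c / (s + 1).
have ct : c = t * (s + 1) by rewrite /t mulfVK //; apply: lt0r_neq0; lra.
have := hq t; rewrite {1}ct => h.
have t0 : t = 0 by nra.
by rewrite ct t0 mul0r.
Qed.

Section InnerProduct.
Variables (R : realType) (H : normedModType R) (ip : H -> H -> R).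
Hypothesis ip_inner : is_inner_product ip.

Lemma ipDl x y z : ip (x + y) z = ip x z + ip y z.
Proof. by case: ip_inner => lin _ _; rewrite -[x in LHS]scale1r lin mul1r. Qed.

Lemma ip0l z : ip 0 z = 0.
Proof. by have := ipDl 0 0 z; rewrite addr0 => h; lra. Qed.

Lemma ipZl a x z : ip (a *: x) z = a * ip x z.
Proof.
by case: ip_inner => lin _ _; have := lin a x 0 z; rewrite addr0 ip0l addr0.
Qed.

Lemma ipC x y : ip x y = ip y x.
Proof. by case: ip_inner. Qed.

Lemma ipxx x : ip x x = `|x| ^+ 2.
Proof. by case: ip_inner. Qed.

Lemma ipBl x y z : ip (x - y) z = ip x z - ip y z.
Proof. by rewrite ipDl -scaleN1r ipZl mulN1r. Qed.

Lemma ip0r z : ip z 0 = 0.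
Proof. by rewrite ipC ip0l. Qed.

Lemma ipDr x y z : ip z (x + y) = ip z x + ip z y.
Proof. by rewrite ipC ipDl ![ip _ z]ipC. Qed.

Lemma ipZr a x z : ip z (a *: x) = a * ip z x.
Proof. by rewrite ipC ipZl ipC. Qed.

Lemma ipBr x y z : ip z (x - y) = ip z x - ip z y.
Proof. by rewrite ipC ipBl ![ip _ z]ipC. Qed.

Lemma ip_sumr v n (g : 'I_n -> H) :
  ip v (\sum_(i < n) g i) = \sum_(i < n) ip v (g i).
Proof. exact: (big_morph (ip v) (fun x y => ipDr x y v) (ip0r v)). Qed.

Lemma normD2 x y : `|x + y| ^+ 2 = `|x| ^+ 2 + 2 * ip x y + `|y| ^+ 2.
Proof. by rewrite -!ipxx ipDl !ipDr (ipC y x); lra. Qed.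

Lemma normB2 x y : `|x - y| ^+ 2 = `|x| ^+ 2 - 2 * ip x y + `|y| ^+ 2.
Proof. by rewrite -!ipxx ipBl !ipBr (ipC y x); lra. Qed.

Lemma ip_eq0 x : ip x x = 0 -> x = 0.
Proof. by rewrite ipxx => /eqP; rewrite sqrf_eq0 normr_eq0 => /eqP. Qed.

(* By polarization, [ip v] is continuous, so the vectors orthogonal to [v]
   form a closed set. *)
Lemma orth_vec_closed v : closed [set w | ip v w = 0].
Proof.
have -> : [set w | ip v w = 0] =
    (fun w => `|v + w| * `|v + w| - `|v - w| * `|v - w|) @^-1` [set 0].
  by apply/seteqP; split => w /=; rewrite -!expr2 normD2 normB2 => h; lra.
apply: preimage_closed; last exact: closed_eq.
move=> w _; have cD : (fun w' => v + w') @ w --> v + w.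
  by apply: cvgD; [exact: cvg_cst | exact: cvg_id].
have cB : (fun w' => v - w') @ w --> v - w.
  by apply: cvgB; [exact: cvg_cst | exact: cvg_id].
by apply: cvgB; apply: cvgM; apply: cvg_norm.
Qed.

Lemma orth_closure v (S : set H) :
  (forall w, S w -> ip v w = 0) -> forall w, closure S w -> ip v w = 0.
Proof.
move=> vS w Sw; suff : closure S `<=` [set w | ip v w = 0] by apply.
rewrite ((closure_id [set w | ip v w = 0]).1 (@orth_vec_closed v)).
exact: closureS.
Qed.

(* A set containing 0 and closed under differences; this is all that the
   uniqueness part of the projection theorem needs. *)
Definition addsubgroup (M : set H) := M 0 /\ forall y z, M y -> M z -> M (y - z).

Lemma closed_subspace_addsubgroup (M : set H) : closed_subspace M -> addsubgroup M.
Proof.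
case=> M0 Mlin _; split=> // y z My Mz.
by have := Mlin (-1) z y Mz My; rewrite scaleN1r addrC.
Qed.

(* [oproj] picks a projection when one exists and returns 0 otherwise; either
   way the result lies in [M] as soon as [M] contains 0. *)
Lemma oproj_mem (M : set H) x : M 0 -> M (oproj ip M x).
Proof. by move=> M0; rewrite /oproj; case: xgetP => [y _ []|]. Qed.

Lemma oproj_eq (M : set H) x p : addsubgroup M -> M p ->
  (forall z, M z -> ip (x - p) z = 0) -> oproj ip M x = p.
Proof.
move=> [M0 MB] Mp xp; rewrite /oproj; case: xgetP => [y _ [My xy]|nop].
  apply/eqP; rewrite -subr_eq0; apply/eqP/ip_eq0.
  have Myp : M (y - p) by apply: MB.
  have {1}-> : y - p = (x - p) - (x - y) by rewrite opprB [RHS]addrC addrA subrK.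
  by rewrite ipBl xp // xy // subr0.
by exfalso; apply: (nop p).
Qed.

Lemma oproj_id (M : set H) y : addsubgroup M -> M y -> oproj ip M y = y.
Proof. by move=> sM My; apply: oproj_eq => // z _; rewrite subrr ip0l. Qed.

Lemma oproj_eq0 (M : set H) x : M 0 -> (forall z, M z -> ip x z = 0) ->
  oproj ip M x = 0.
Proof.
move=> M0 xM; rewrite /oproj; case: xgetP => // y _ [My xy].
by apply: ip_eq0; have := xy y My; rewrite ipBl xM // => h; lra.
Qed.

Lemma nearest_orth (M : set H) x m :
  (forall (a : R) y z, M y -> M z -> M (a *: y + z)) -> M m ->
  (forall m', M m' -> `|x - m| ^+ 2 <= `|x - m'| ^+ 2) ->
  forall z, M z -> ip (x - m) z = 0.
Proof.
move=> Mlin Mm near z Mz; apply: (quadratic_dominates_linear (sqr_ge0 `|z|)).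
move=> t; have := near _ (Mlin t z m Mz Mm).
have -> : x - (t *: z + m) = (x - m) - t *: z by rewrite opprD addrA addrAC.
by rewrite [X in _ <= X]normB2 ipZr normrZ exprMn real_normK ?num_real //; lra.
Qed.
End InnerProduct.

Lemma inv_succ_small (R : archiRealFieldType) (e : R) : 0 < e ->
  exists N : nat, forall n, (N <= n)%N -> n.+1%:R^-1 < e.
Proof.
move=> e0; exists (Num.truncn e^-1) => n Nn.
rewrite -[e]invrK ltf_pV2 ?posrE ?invr_gt0 ?ltr0Sn //.
by apply: lt_le_trans (truncnS_gt _) _; rewrite ler_nat ltnS.
Qed.

Section HilbertProjection.
Variables (R : realType) (H : completeNormedModType R) (ip : H -> H -> R).
Hypothesis ip_inner : is_inner_product ip.
Variables (M : set H) (x : H).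
Hypothesis M_closed : closed_subspace M.

Let M0 : M 0. Proof. by case: M_closed. Qed.
Let Mcl : closed M. Proof. by case: M_closed. Qed.
Let Mlin a y z : M y -> M z -> M (a *: y + z).
Proof. by case: M_closed => _ lin _; exact: lin. Qed.

Definition dist2 := inf [set `|x - m| ^+ 2 | m in M].

Lemma dist2_le m : M m -> dist2 <= `|x - m| ^+ 2.
Proof.
by move=> Mm; apply: ge_inf; [exists 0 => _ [? _ <-]; exact: sqr_ge0 | exists m].
Qed.

Lemma dist2_approx (n : nat) :
  exists m, M m /\ `|x - m| ^+ 2 < dist2 + n.+1%:R^-1.
Proof.
have n0 : 0 < n.+1%:R^-1 :> R by rewrite invr_gt0 ltr0Sn.
have hinf : has_inf [set `|x - m| ^+ 2 | m in M].
  by split; [exists (`|x - 0| ^+ 2), 0 | exists 0 => _ [? _ <-]; exact: sqr_ge0].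
by have [_ [m Mm <-] lt] := inf_adherent n0 hinf; exists m.
Qed.

(* Parallelogram law applied to [x - m] and [x - m']: two nearly nearest
   points are close to each other, since their midpoint lies in [M]. *)
Lemma nearly_nearest_close m m' (e e' : R) : M m -> M m' ->
  `|x - m| ^+ 2 < dist2 + e -> `|x - m'| ^+ 2 < dist2 + e' ->
  `|m - m'| ^+ 2 <= 2 * e + 2 * e'.
Proof.
move=> Mm Mm' near near'; set w := 2^-1 *: (m + m').
have Mw : M w by have := Mlin 2^-1 (Mlin 1 Mm Mm') M0; rewrite scale1r addr0.
have dw := dist2_le Mw.
have sum : (x - m) + (x - m') = (x - w) + (x - w).
  have ww : w + w = m + m'.
    by rewrite -mulr2n -scaler_nat scalerA mulfV ?scale1r // pnatr_eq0.
  by rewrite [RHS]addrACA [LHS]addrACA -!opprD ww.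
have diff : (x - m) - (x - m') = m' - m by rewrite opprB addrC addrA subrK.
have := normD2 ip_inner (x - m) (x - m'); have := normB2 ip_inner (x - m) (x - m').
rewrite sum diff (normD2 ip_inner (x - w)) (ipxx ip_inner) distrC; lra.
Qed.

(* Existence of a nearest point: a minimizing sequence is Cauchy, and its
   limit lies in the closed set [M] and realizes the distance. *)
Lemma nearest_exists : exists2 m, M m &
  forall m', M m' -> `|x - m| ^+ 2 <= `|x - m'| ^+ 2.
Proof.
have [u hu] := choice dist2_approx.
have u_cvg : u @ \oo --> lim (u @ \oo).
  apply/cauchy_cvgP/cauchy_exP => e e0.
  have [N hN] := inv_succ_small (divr_gt0 (exprn_gt0 2 e0) (ltr0n R 4)).
  exists (u N); exists N => // n /= Nn; rewrite -ball_normE /=.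
  suff : `|u N - u n| ^+ 2 < e ^+ 2 by have := normr_ge0 (u N - u n); nra.
  apply: le_lt_trans (nearly_nearest_close (hu N).1 (hu n).1 (hu N).2 (hu n).2) _.
  have : n.+1%:R^-1 <= N.+1%:R^-1 :> R by rewrite lef_pV2 ?posrE ?ltr0Sn ?ler_nat.
  move: (hN N (leqnn N)); set iN := N.+1%:R^-1; set i_n := n.+1%:R^-1; lra.
set m := lim (u @ \oo); exists m => [|m' Mm'].
  by apply: (closed_cvg M Mcl _ _ u_cvg); apply: nearW => n; case: (hu n).
apply: le_trans (dist2_le Mm'); apply/ler_addgt0Pr => e e0.
have [N hN] := inv_succ_small e0.
have dist_cvg : (fun n => `|x - u n| ^+ 2) @ \oo --> `|x - m| ^+ 2.
  under eq_fun do rewrite expr2; rewrite expr2.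
  by apply: cvgM; apply: cvg_norm; apply: cvgB => //; exact: cvg_cst.
apply: (closed_cvg [set r | r <= dist2 + e] (@closed_le _ (dist2 + e)) _ _ dist_cvg).
by exists N => // n /= Nn; move: (hu n).2 (hN n Nn); set i_n := n.+1%:R^-1; lra.
Qed.

Theorem oprojP : M (oproj ip M x) /\
  forall z, M z -> ip (x - oproj ip M x) z = 0.
Proof.
have [m Mm near] := nearest_exists.
have xm := nearest_orth ip_inner Mlin Mm near.
by rewrite (oproj_eq ip_inner (closed_subspace_addsubgroup M_closed) Mm xm).
Qed.
End HilbertProjection.

Section ClosedSums.
Variables (R : realType) (H : normedModType R) (ip : H -> H -> R).
Hypothesis ip_inner : is_inner_product ip.
Variables (I : Type) (Hs : I -> set H).

Lemma Hsum0 (B : set I) : Hsum Hs B 0.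
Proof.
apply: subset_closure; exists 0%N, (fun i : 'I_0 => False_rect I (notF (ltn_ord i))).
by exists (fun _ => 0); split; [case | rewrite big_ord0].
Qed.

Lemma orth_Hsum (B : set I) v :
  (forall c, B c -> forall w, Hs c w -> ip v w = 0) ->
  forall w, Hsum Hs B w -> ip v w = 0.
Proof.
move=> vB; apply: orth_closure => // _ [n [f [g [fg ->]]]].
rewrite (ip_sumr ip_inner) big1 // => i _.
by have [Bf Hg] := fg i; exact: vB Bf _ Hg.
Qed.
End ClosedSums.

Section Filtration.
Variables (R : realType) (H : completeNormedModType R) (ip : H -> H -> R).
Variables (d : Order.disp_t) (A : porderType d) (Hs : A -> set H).
Hypothesis ip_inner : is_inner_product ip.
Hypothesis Hs_closed : forall a, closed_subspace (Hs a).
Hypothesis Hs_meet : forall a b : A,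
  oproj ip (Hsum Hs [set c | (c <= a)%O /\ (c <= b)%O])
  = oproj ip (Hs a) \o oproj ip (Hs b).

(* The key use of the intersection property: a vector [v] of [H_y] orthogonal
   to every [H_c] with [c <= x] and [c <= y] is orthogonal to [H_x], because
   [pi_x v = pi_x (pi_y v) = pi(x^ `&` y^) v = 0]. *)
Lemma orth_of_orth_meet x y v : Hs y v ->
  (forall c, (c <= x)%O -> (c <= y)%O -> forall w, Hs c w -> ip v w = 0) ->
  forall w, Hs x w -> ip v w = 0.
Proof.
move=> Hyv v_meet w Hxw.
have piy : oproj ip (Hs y) v = v.
  apply: (oproj_id ip_inner) Hyv; apply: closed_subspace_addsubgroup.
  exact: Hs_closed.
have pimeet : oproj ip (Hsum Hs [set c | (c <= x)%O /\ (c <= y)%O]) v = 0.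
  apply: (oproj_eq0 ip_inner (Hsum0 _ _)).
  by apply: orth_Hsum => // c [cx cy]; exact: v_meet.
have pix : oproj ip (Hs x) v = 0 by rewrite -piy -[RHS]pimeet Hs_meet.
have [_ xres] := oprojP ip_inner v (Hs_closed x).
by have := xres w Hxw; rewrite pix subr0.
Qed.

Lemma Sset_addsubgroup a : addsubgroup (Sset ip Hs a).
Proof.
have Ha : addsubgroup (Hplus Hs a).
  by case: a => [x|] //=; exact: closed_subspace_addsubgroup.
split; first by split; [exact: Ha.1 | move=> b _ y _; rewrite ip0l].
move=> u v [Hu ou] [Hv ov]; split; first exact: Ha.2.
by move=> b ba z Hz; rewrite (ipBl ip_inner) (ou b ba z Hz) (ov b ba z Hz) subr0.
Qed.

(* The spaces [S_a], [a] in [A^+], are mutually orthogonal: for comparable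
   indices this is built into the definition of [S_a]; for incomparable ones
   it follows from [orth_of_orth_meet]. *)
Lemma Sset_orth a b : a != b ->
  forall u v, Sset ip Hs a u -> Sset ip Hs b v -> ip v u = 0.
Proof.
move=> ab u v [Hu ou] [Hv ov].
have [ba|nba] := boolP (ltplus b a).
  by rewrite (ipC ip_inner); exact: (ou b ba v Hv).
have [lab|nab] := boolP (ltplus a b); first exact: (ov a lab u Hu).
case: a b ab Hu ou Hv ov nba nab => [x|] [y|] //= xy Hu _ Hv ov nyx _.
have yx : ~~ (y <= x)%O.
  by apply: contra nyx => yx; rewrite /ltplus /= yx andbT eq_sym.
apply: (orth_of_orth_meet Hv _ Hu) => c cx cy; apply: (ov (Some c)).
by rewrite /ltplus /= cy andbT; apply: contraNneq yx => -[<-].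
Qed.
End Filtration.

Theorem lemma3p5 (R : realType) (H : completeNormedModType R)
  (ip : H -> H -> R) (d : Order.disp_t) (A : porderType d) (Hs : A -> set H) :
  is_inner_product ip ->
  (forall a, closed_subspace (Hs a)) ->
  (forall a b : A, (a <= b)%O -> Hs a `<=` Hs b) ->
  (forall a b : A,
     oproj ip (Hsum Hs [set c | (c <= a)%O /\ (c <= b)%O])
     = oproj ip (Hs a) \o oproj ip (Hs b)) ->
  forall a b : option A,
    oproj ip (Sset ip Hs a) \o oproj ip (Sset ip Hs b)
    = (fun x => if a == b then oproj ip (Sset ip Hs a) x else 0).
Proof.
move=> ip_inner Hs_closed _ Hs_meet a b; apply/funext => x /=.
have S_sub c := Sset_addsubgroup ip_inner Hs_closed c.
have S0 c : Sset ip Hs c 0 by case: (S_sub c).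
case: eqVneq => [<-|ab].
  by apply: (oproj_id ip_inner (S_sub a)); apply: oproj_mem.
apply: (oproj_eq0 ip_inner (S0 a)) => z Saz.
by apply: (Sset_orth ip_inner Hs_closed Hs_meet ab Saz); apply: oproj_mem.
Qed.
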